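(* Let $r\ge2$, $d_1=1$, $\lambda_1=0$, $d_i\ge2$ integers and $\lambda_i>0$ for $i=2,\dots,r$, $n=\sum_id_i$. In the variables $(X_1,\dots,X_r,Y_2,\dots,Y_r)$ consider the system $X_i'=X_i(\mathcal G-1)+\frac{\lambda_iY_i^2}{\sqrt{d_i}}$ ($i=1,\dots,r$), $Y_i'=Y_i\big(\mathcal G-\frac{X_i}{\sqrt{d_i}}\big)$ ($i=2,\dots,r$), where $\mathcal G=\sum_{j=1}^rX_j^2$. Let $\mathcal L=\sum_{i=1}^rX_i^2+\sum_{i=2}^r\lambda_iY_i^2-1$, $\mathcal H=\sum_{i=1}^r\sqrt{d_i}X_i$, $$\mathcal D=\{\mathcal L=0,\ \mathcal H=1\}\cap\{Y_i>0\ (i\ge2),\ |X_1-1|<\sqrt2\},$$ and $$\hat{\mathscr F}=\frac{1-\frac{1}{n-1}(1-X_1)^2}{\prod_{i=2}^r\big(\sqrt{\lambda_i}\,Y_i\big)^{\frac{2d_i}{n-1}}}.$$ Then $\hat{\mathscr F}$ is non-increasing along every trajectory of this system lying in $\mathcal D$. *)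

From Stdlib Require Import Reals.
From Coquelicot Require Import Coquelicot.
Open Scope R_scope.

(* Indices i = 1..r of the paper are encoded as 0..r-1 (paper index i <-> code i-1). *)

Fixpoint sumR (m : nat) (f : nat -> R) : R :=
  match m with O => 0 | S k => sumR k f + f k end.

Fixpoint prodR (m : nat) (f : nat -> R) : R :=
  match m with O => 1 | S k => prodR k f * f k end.

Fixpoint sumN (m : nat) (f : nat -> nat) : nat :=
  match m with O => O | S k => (sumN k f + f k)%nat end.

Definition Gfun (r : nat) (x : nat -> R) : R := sumR r (fun j => x j ^ 2).

Definition Lfun (r : nat) (lam : nat -> R) (x y : nat -> R) : R :=
  sumR r (fun i => x i ^ 2) + sumR (r - 1) (fun k => lam (S k) * y (S k) ^ 2) - 1.

Definition Hfun (r : nat) (d : nat -> nat) (x : nat -> R) : R :=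
  sumR r (fun i => sqrt (INR (d i)) * x i).

Definition inD (r : nat) (d : nat -> nat) (lam : nat -> R) (x y : nat -> R) : Prop :=
  Lfun r lam x y = 0 /\ Hfun r d x = 1 /\
  (forall i : nat, (1 <= i < r)%nat -> 0 < y i) /\
  Rabs (x 0%nat - 1) < sqrt 2.

Definition Fhat (r : nat) (d : nat -> nat) (lam : nat -> R) (x y : nat -> R) : R :=
  let n := INR (sumN r d) in
  (1 - (1 - x 0%nat) ^ 2 / (n - 1)) /
  prodR (r - 1) (fun k => Rpower (sqrt (lam (S k)) * y (S k)) (2 * INR (d (S k)) / (n - 1))).

(* Write the Lyapunov function as F = N exp(-S), where N = 1 - (1 - X_1)^2/m with m = n - 1,
   and S = sum_{i>=2} (2 d_i/m) ln(sqrt(lambda_i) Y_i).  Along the flow, with u = 1 - X_1,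
   the constraint H = 1 says that sum_{i>=2} sqrt(d_i) X_i = u, and one finds
     N' - N S' = -2 (m - u) (m G - u^2) / m^2.
   Here m - u > 0 because |u| < sqrt 2 <= 2 <= m, and m G >= u^2 is the Cauchy-Schwarz
   inequality u^2 <= (sum_{i>=2} d_i) (sum_{i>=2} X_i^2).  Hence F' = (N' - N S') exp(-S) <= 0. *)
From Stdlib Require Import Reals Lra Lia.
From Coquelicot Require Import Coquelicot.
Open Scope R_scope.

Lemma sumR_ext m f g : (forall k, (k < m)%nat -> f k = g k) -> sumR m f = sumR m g.
Proof.
  induction m as [|m IH]; intros E; simpl; [reflexivity|].
  rewrite IH, E by (intros; try apply E; lia). reflexivity.
Qed.

Lemma sumR_plus m f g : sumR m (fun k => f k + g k) = sumR m f + sumR m g.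
Proof. induction m as [|m IH]; simpl; [lra|]. rewrite IH. ring. Qed.

Lemma sumR_scal m c f : sumR m (fun k => c * f k) = c * sumR m f.
Proof. induction m as [|m IH]; simpl; [ring|]. rewrite IH. ring. Qed.

Lemma sumR_nonneg m f : (forall k, (k < m)%nat -> 0 <= f k) -> 0 <= sumR m f.
Proof.
  induction m as [|m IH]; intros Hf; simpl; [lra|].
  assert (0 <= f m) by (apply Hf; lia).
  assert (0 <= sumR m f) by (apply IH; intros; apply Hf; lia).
  lra.
Qed.

Lemma sumR_shift m f : sumR (S m) f = f 0%nat + sumR m (fun k => f (S k)).
Proof. induction m as [|m IH]; simpl in *; [ring|]. rewrite IH. ring. Qed.

Lemma sumR_shift_pred m f : (1 <= m)%nat -> sumR m f = f 0%nat + sumR (m - 1) (fun k => f (S k)).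
Proof. intros Hm. replace m with (S (m - 1)) at 1 by lia. apply sumR_shift. Qed.

Lemma INR_sumN m f : INR (sumN m f) = sumR m (fun k => INR (f k)).
Proof. induction m as [|m IH]; simpl; [reflexivity|]. rewrite plus_INR, IH. reflexivity. Qed.

Lemma prodR_exp m f : prodR m (fun k => exp (f k)) = exp (sumR m f).
Proof. induction m as [|m IH]; simpl; [now rewrite exp_0|]. rewrite IH, exp_plus. reflexivity. Qed.

Lemma sumR_cauchy_schwarz m a b :
  0 < sumR m (fun k => a k ^ 2) ->
  sumR m (fun k => a k * b k) ^ 2 <= sumR m (fun k => a k ^ 2) * sumR m (fun k => b k ^ 2).
Proof.
  set (A := sumR m (fun k => a k ^ 2)); set (P := sumR m (fun k => a k * b k));
    set (B := sumR m (fun k => b k ^ 2)); intros HA.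
  assert (Hsq : 0 <= sumR m (fun k => (b k - P / A * a k) ^ 2))
    by (apply sumR_nonneg; intros; apply pow2_ge_0).
  rewrite (sumR_ext m _ (fun k => b k ^ 2 + (-2 * (P / A) * (a k * b k) + (P / A) ^ 2 * a k ^ 2)))
    in Hsq by (intros; ring).
  rewrite !sumR_plus, !sumR_scal in Hsq. fold A B P in Hsq.
  assert (E : A * (B + (-2 * (P / A) * P + (P / A) ^ 2 * A)) = A * B - P ^ 2) by (field; lra).
  assert (0 <= A * (B + (-2 * (P / A) * P + (P / A) ^ 2 * A))) by (apply Rmult_le_pos; lra).
  lra.
Qed.

Lemma sumR_weighted_rate m (w x : nat -> R) (G : R) :
  (forall k, (k < m)%nat -> 0 < w k) ->
  sumR m (fun k => w k * (G - x k / sqrt (w k)))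
  = G * sumR m w - sumR m (fun k => sqrt (w k) * x k).
Proof.
  intros Hw.
  rewrite (sumR_ext m _ (fun k => G * w k + -1 * (sqrt (w k) * x k))).
  - rewrite sumR_plus, !sumR_scal. ring.
  - intros k Hk. specialize (Hw k Hk).
    assert (Hs : 0 < sqrt (w k)) by (apply sqrt_lt_R0; lra).
    assert (E : w k = sqrt (w k) * sqrt (w k)) by (rewrite sqrt_sqrt; lra).
    set (s := sqrt (w k)) in *. rewrite E. field. lra.
Qed.

Lemma is_derive_sumR m (f : nat -> R -> R) f' t :
  (forall k, (k < m)%nat -> is_derive (f k) t (f' k)) ->
  is_derive (fun t => sumR m (fun k => f k t)) t (sumR m f').
Proof.
  induction m as [|m IH]; simpl; intros Df.
  - apply (is_derive_const 0).
  - apply (is_derive_plus (fun t => sumR m (fun k => f k t)) (f m));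
      [apply IH; intros | ]; apply Df; lia.
Qed.

Lemma is_derive_ln_scal (y : R -> R) c y' t :
  0 < c -> 0 < y t -> is_derive y t y' ->
  is_derive (fun t => ln (c * y t)) t (y' / y t).
Proof.
  intros Hc Hy Dy.
  replace (y' / y t) with (scal y' (c * / (c * y t)))
    by (change (y' * (c * / (c * y t)) = y' / y t); field; lra).
  apply (is_derive_comp (fun z => ln (c * z)) y); [|exact Dy].
  auto_derive; [nra|field; nra].
Qed.

Lemma is_derive_mult_exp_opp (f g : R -> R) f' g' t :
  is_derive f t f' -> is_derive g t g' ->
  is_derive (fun t => f t * exp (- g t)) t ((f' - f t * g') * exp (- g t)).
Proof.
  intros Df Dg.
  replace ((f' - f t * g') * exp (- g t))
    with (f' * exp (- g t) + f t * scal (- g') (exp (- g t))) by (unfold scal; simpl; unfold mult; simpl; ring).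
  apply (is_derive_mult f (fun t => exp (- g t))); [exact Df| |intros; apply Rmult_comm].
  apply (is_derive_comp exp (fun t => - g t));
    [apply is_derive_exp | apply (is_derive_opp g); exact Dg].
Qed.

Lemma nonincr_function (f : R -> R) (a b : Rbar) :
  (forall x : R, Rbar_lt a x -> Rbar_lt x b -> exists v, is_derive f x v /\ v <= 0) ->
  forall x y : R, Rbar_lt a x -> Rbar_lt y b -> x <= y -> f y <= f x.
Proof.
  intros Df x y Hax Hyb Hxy.
  assert (Hin : forall z, x <= z <= y -> Rbar_lt a z /\ Rbar_lt z b).
  { intros z Hz. split.
    - destruct a; simpl in *; auto; lra.
    - destruct b; simpl in *; auto; lra. }
  assert (Dderive : forall z, x <= z <= y -> is_derive f z (Derive f z) /\ Derive f z <= 0).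
  { intros z Hz. destruct (Hin z Hz) as [Ha Hb]. destruct (Df z Ha Hb) as [v [Dv Hv]].
    rewrite (is_derive_unique f z v Dv). auto. }
  destruct (MVT_gen f x y (Derive f)) as [c [Hc Hmvt]];
    rewrite ?Rmin_left, ?Rmax_right in * by lra.
  - intros z Hz. apply Dderive. lra.
  - intros z Hz. apply continuity_pt_filterlim, (ex_derive_continuous f z).
    eexists. apply Dderive, Hz.
  - destruct (Dderive c Hc). nra.
Qed.

Lemma lyapunov_rate_nonpos (m G u : R) :
  2 <= m -> u ^ 2 < 2 -> u ^ 2 <= m * G ->
  2 * u * ((1 - u) * (G - 1)) / m - (1 - u ^ 2 / m) * (2 / m * (m * G - u)) <= 0.
Proof.
  intros Hm Hu HG.
  replace (2 * u * ((1 - u) * (G - 1)) / m - (1 - u ^ 2 / m) * (2 / m * (m * G - u)))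
    with (- 2 * ((m - u) * (m * G - u ^ 2)) / (m * m)) by (field; lra).
  assert (u < m) by nra.
  assert (0 <= (m - u) * (m * G - u ^ 2)) by (apply Rmult_le_pos; lra).
  unfold Rdiv. apply Rmult_le_0_r; [lra|]. apply Rlt_le, Rinv_0_lt_compat. nra.
Qed.

Lemma Fhat_exp_form r d lam x y :
  Fhat r d lam x y =
  (1 - (1 - x 0%nat) ^ 2 / (INR (sumN r d) - 1))
  * exp (- sumR (r - 1) (fun k => 2 * INR (d (S k)) / (INR (sumN r d) - 1)
                                  * ln (sqrt (lam (S k)) * y (S k)))).
Proof. unfold Fhat, Rpower. cbv zeta. rewrite prodR_exp, exp_Ropp. reflexivity. Qed.

Section Trajectory.

Variables (r : nat) (d : nat -> nat) (lam : nat -> R) (a b : Rbar) (X Y : nat -> R -> R).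

Hypotheses (hr : (2 <= r)%nat) (hd0 : d 0%nat = 1%nat) (hl0 : lam 0%nat = 0)
  (hd : forall i : nat, (1 <= i < r)%nat -> (2 <= d i)%nat)
  (hl : forall i : nat, (1 <= i < r)%nat -> 0 < lam i).

Hypotheses
  (hX : forall t : R, Rbar_lt a t -> Rbar_lt t b ->
     forall i : nat, (i < r)%nat ->
       is_derive (X i) t
         (X i t * (Gfun r (fun j => X j t) - 1)
          + lam i * (Y i t) ^ 2 / sqrt (INR (d i))))
  (hY : forall t : R, Rbar_lt a t -> Rbar_lt t b ->
     forall i : nat, (1 <= i < r)%nat ->
       is_derive (Y i) t
         (Y i t * (Gfun r (fun j => X j t) - X i t / sqrt (INR (d i)))))
  (hD : forall t : R, Rbar_lt a t -> Rbar_lt t b ->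
     inD r d lam (fun j => X j t) (fun j => Y j t)).

Let m := INR (sumN r d) - 1.
Let w k := INR (d (S k)).
Let G t := Gfun r (fun j => X j t).

Lemma w_pos k : (k < r - 1)%nat -> 0 < w k.
Proof. intros Hk. apply lt_0_INR. assert (2 <= d (S k))%nat by (apply hd; lia). lia. Qed.

Lemma m_eq_sum_w : m = sumR (r - 1) w.
Proof.
  unfold m, w. rewrite INR_sumN, sumR_shift_pred, hd0 by lia. simpl. ring.
Qed.

Lemma two_le_m : 2 <= m.
Proof.
  rewrite m_eq_sum_w, sumR_shift_pred by lia.
  assert (2 <= w 0%nat) by (apply (le_INR 2), hd; lia).
  assert (0 <= sumR (r - 1 - 1) (fun k => w (S k)))
    by (apply sumR_nonneg; intros; apply pos_INR).
  lra.
Qed.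

Lemma tail_H_eq (t : R) : Rbar_lt a t -> Rbar_lt t b ->
  sumR (r - 1) (fun k => sqrt (w k) * X (S k) t) = 1 - X 0%nat t.
Proof.
  intros Ha Hb. destruct (hD t Ha Hb) as [_ [HH _]].
  unfold Hfun in HH. rewrite sumR_shift_pred, hd0 in HH by lia. simpl in HH. rewrite sqrt_1 in HH.
  unfold w. lra.
Qed.

Lemma sq_one_sub_X0_le (t : R) : Rbar_lt a t -> Rbar_lt t b -> (1 - X 0%nat t) ^ 2 <= m * G t.
Proof.
  intros Ha Hb.
  assert (Hsq : forall k, (k < r - 1)%nat -> sqrt (w k) ^ 2 = w k)
    by (intros k Hk; rewrite <- Rsqr_pow2; apply Rsqr_sqrt, Rlt_le, w_pos, Hk).
  assert (HA : sumR (r - 1) (fun k => sqrt (w k) ^ 2) = m)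
    by (rewrite m_eq_sum_w; apply sumR_ext, Hsq).
  assert (CS := sumR_cauchy_schwarz (r - 1) (fun k => sqrt (w k)) (fun k => X (S k) t)).
  cbv beta in CS. rewrite HA, tail_H_eq in CS by auto.
  assert (HG : G t = X 0%nat t ^ 2 + sumR (r - 1) (fun k => X (S k) t ^ 2))
    by (unfold G, Gfun; apply sumR_shift_pred; lia).
  assert (Hm := two_le_m).
  assert (0 <= X 0%nat t ^ 2) by apply pow2_ge_0.
  specialize (CS ltac:(lra)). rewrite HG. nra.
Qed.

Lemma is_derive_Fhat_numerator (t : R) : Rbar_lt a t -> Rbar_lt t b ->
  is_derive (fun t => 1 - (1 - X 0%nat t) ^ 2 / m) t
    (2 * (1 - X 0%nat t) * (X 0%nat t * (G t - 1)) / m).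
Proof.
  intros Ha Hb.
  assert (DX := hX t Ha Hb 0%nat ltac:(lia)).
  unfold Rdiv in DX. rewrite hl0, !Rmult_0_l, Rplus_0_r in DX.
  assert (Hm := two_le_m).
  replace (2 * (1 - X 0%nat t) * (X 0%nat t * (G t - 1)) / m)
    with (scal (X 0%nat t * (G t - 1)) (2 * (1 - X 0%nat t) / m))
    by (unfold scal; simpl; unfold mult; simpl; field; lra).
  apply (is_derive_comp (fun z => 1 - (1 - z) ^ 2 / m) (X 0%nat)); [|exact DX].
  auto_derive; [lra|field; lra].
Qed.

Lemma is_derive_Fhat_log_sum (t : R) : Rbar_lt a t -> Rbar_lt t b ->
  is_derive (fun t => sumR (r - 1) (fun k => 2 * w k / m * ln (sqrt (lam (S k)) * Y (S k) t))) t
    (2 / m * (m * G t - (1 - X 0%nat t))).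
Proof.
  intros Ha Hb.
  destruct (hD t Ha Hb) as [_ [_ [HYpos _]]].
  assert (Hm := two_le_m).
  assert (Hrate : 2 / m * (m * G t - (1 - X 0%nat t))
                  = sumR (r - 1) (fun k => 2 / m * (w k * (G t - X (S k) t / sqrt (w k))))).
  { rewrite sumR_scal, sumR_weighted_rate, <- m_eq_sum_w, tail_H_eq by (auto using w_pos).
    ring. }
  rewrite Hrate.
  apply (is_derive_sumR (r - 1) (fun k t => 2 * w k / m * ln (sqrt (lam (S k)) * Y (S k) t))).
  intros k Hk.
  assert (Hl : 0 < lam (S k)) by (apply hl; lia).
  assert (Hy : 0 < Y (S k) t) by (apply HYpos; lia).
  assert (Hs : 0 < sqrt (w k)) by (apply sqrt_lt_R0, w_pos; lia).
  assert (DY := is_derive_ln_scal (Y (S k)) _ _ t (sqrt_lt_R0 _ Hl) Hy (hY t Ha Hb (S k) ltac:(lia))).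
  replace (2 / m * (w k * (G t - X (S k) t / sqrt (w k))))
    with (scal (2 * w k / m) (Y (S k) t * (G t - X (S k) t / sqrt (w k)) / Y (S k) t))
    by (unfold scal; simpl; unfold mult; simpl; field; repeat split; apply Rgt_not_eq; lra).
  apply (is_derive_scal (fun t => ln (sqrt (lam (S k)) * Y (S k) t))). exact DY.
Qed.

Lemma is_derive_Fhat_nonpos (t : R) : Rbar_lt a t -> Rbar_lt t b ->
  exists v, is_derive (fun t => Fhat r d lam (fun j => X j t) (fun j => Y j t)) t v /\ v <= 0.
Proof.
  intros Ha Hb.
  assert (DF := is_derive_mult_exp_opp _ _ _ _ t
                  (is_derive_Fhat_numerator t Ha Hb) (is_derive_Fhat_log_sum t Ha Hb)).
  eexists. split.
  - apply (is_derive_ext _ _ t _ (fun s => eq_sym (Fhat_exp_form r d lam _ _))), DF.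
  - apply Rmult_le_0_r; [|apply Rlt_le, exp_pos].
    destruct (hD t Ha Hb) as [_ [_ [_ Habs]]].
    assert (Hu : (1 - X 0%nat t) ^ 2 < 2).
    { rewrite <- Rsqr_pow2, <- (Rsqr_sqrt 2) by lra.
      apply Rsqr_lt_abs_1. rewrite Rabs_minus_sym, (Rabs_pos_eq (sqrt 2)) by apply sqrt_pos.
      exact Habs. }
    set (u := 1 - X 0%nat t) in *.
    replace (X 0%nat t) with (1 - u) by (unfold u; ring).
    apply lyapunov_rate_nonpos; [apply two_le_m | exact Hu | apply sq_one_sub_X0_le; auto].
Qed.

End Trajectory.

Theorem lemma4p2
  (r : nat) (d : nat -> nat) (lam : nat -> R)
  (hr : (2 <= r)%nat)
  (hd0 : d 0%nat = 1%nat) (hl0 : lam 0%nat = 0)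
  (hd : forall i : nat, (1 <= i < r)%nat -> (2 <= d i)%nat)
  (hl : forall i : nat, (1 <= i < r)%nat -> 0 < lam i)
  (a b : Rbar) (X Y : nat -> R -> R)
  (hX : forall t : R, Rbar_lt a t -> Rbar_lt t b ->
     forall i : nat, (i < r)%nat ->
       is_derive (X i) t
         (X i t * (Gfun r (fun j => X j t) - 1)
          + lam i * (Y i t) ^ 2 / sqrt (INR (d i))))
  (hY : forall t : R, Rbar_lt a t -> Rbar_lt t b ->
     forall i : nat, (1 <= i < r)%nat ->
       is_derive (Y i) t
         (Y i t * (Gfun r (fun j => X j t) - X i t / sqrt (INR (d i)))))
  (hD : forall t : R, Rbar_lt a t -> Rbar_lt t b ->
     inD r d lam (fun j => X j t) (fun j => Y j t)) :
  forall s t : R, Rbar_lt a s -> Rbar_lt t b -> s <= t ->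
    Fhat r d lam (fun j => X j t) (fun j => Y j t)
    <= Fhat r d lam (fun j => X j s) (fun j => Y j s).
Proof.
  apply (nonincr_function (fun t => Fhat r d lam (fun j => X j t) (fun j => Y j t)) a b).
  exact (is_derive_Fhat_nonpos r d lam a b X Y hr hd0 hl0 hd hl hX hY hD).
Qed.
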